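(* Let $M(C,\bar\xi,\pi)$ be a Myller configuration in $E^3$ with Darboux frame $(\bar\xi,\bar\mu,\bar v)$ and invariants $G,K,T$ (notation in the context), and assume $(G(s),K(s))\neq(0,0)$ for all $s$. Define $$\sigma_\xi=\frac{K^{2}\left(\frac{G}{K}\right)'-(G^{2}+K^{2})T}{(G^{2}+K^{2})^{3/2}},$$ where $K^2\left(\frac{G}{K}\right)'$ stands for $G'K-GK'$. Then $C$ is a $\bar\xi$-helix in $M$ if and only if $\sigma_\xi$ is constant; in that case the constant angle $\theta$ between $\bar\xi$ and the fixed axis satisfies $\cot\theta=\mp\sigma_\xi$ (for an appropriate choice of sign).
   Context: Let $C$ be a smooth curve in Euclidean 3-space $E^3$ parametrized by arclength $s\in I$; primes denote $d/ds$. A Myller configuration $M(C,\bar\xi,\pi)$ consists of a smooth unit vector field (versor field) $\bar\xi(s)$ along $C$ and a smooth field of oriented planes $\pi(s)$ along $C$ with $\bar\xi(s)\in\pi(s)$. Let $\bar v(s)$ be the unit normal of the oriented plane $\pi(s)$ and $\bar\mu=\bar v\times\bar\xi$. The Darboux frame $(\bar\xi,\bar\mu,\bar v)$ is a positively oriented orthonormal frame satisfying $\bar\xi'=G\bar\mu+K\bar v$, $\bar\mu'=-G\bar\xi+T\bar v$, $\bar v'=-K\bar\xi-T\bar\mu$, where the smooth functions $G,K,T$ are called the geodesic curvature, normal curvature and geodesic torsion of $(C,\bar\xi)$ in $M$. The curve $C$ is called a $\bar\xi$-helix in $M$ if there exist a fixed (constant) unit vector $\bar d_\xi$ and a constant $\theta$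 with $\langle\bar\xi(s),\bar d_\xi\rangle=\cos\theta$ for all $s$. *)

From Stdlib Require Import Reals.
From Coquelicot Require Import Coquelicot.
Open Scope R_scope.

Definition R3 : Type := (R * R * R)%type.
Definition v1 (u : R3) : R := fst (fst u).
Definition v2 (u : R3) : R := snd (fst u).
Definition v3 (u : R3) : R := snd u.
Definition mk3 (x y z : R) : R3 := (x, y, z).

Definition vadd (u w : R3) : R3 := mk3 (v1 u + v1 w) (v2 u + v2 w) (v3 u + v3 w).
Definition vscal (c : R) (u : R3) : R3 := mk3 (c * v1 u) (c * v2 u) (c * v3 u).
Definition dot (u w : R3) : R := v1 u * v1 w + v2 u * v2 w + v3 u * v3 w.
Definition cross (u w : R3) : R3 :=
  mk3 (v2 u * v3 w - v3 u * v2 w)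
      (v3 u * v1 w - v1 u * v3 w)
      (v1 u * v2 w - v2 u * v1 w).
Definition det3 (u w z : R3) : R := dot u (cross w z).

Definition in_I (a b : Rbar) (s : R) : Prop := Rbar_lt a s /\ Rbar_lt s b.

Definition smooth_on (a b : Rbar) (f : R -> R) : Prop :=
  forall (n : nat) (s : R), in_I a b s -> ex_derive (Derive_n f n) s.

Definition vsmooth_on (a b : Rbar) (f : R -> R3) : Prop :=
  smooth_on a b (fun t => v1 (f t)) /\ smooth_on a b (fun t => v2 (f t)) /\
  smooth_on a b (fun t => v3 (f t)).

Definition vis_derive (f : R -> R3) (s : R) (v : R3) : Prop :=
  is_derive (fun t => v1 (f t)) s (v1 v) /\
  is_derive (fun t => v2 (f t)) s (v2 v) /\
  is_derive (fun t => v3 (f t)) s (v3 v).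

(* Darboux frame (xi, mu, nu) of a Myller configuration M(C, xi, pi) with
   invariants G (geodesic curvature), K (normal curvature), T (geodesic
   torsion): nu is the unit normal of the oriented plane pi, xi a unit vector
   in pi, mu = nu x xi, the frame is positively oriented orthonormal, and the
   Darboux derivative formulas hold. *)
Definition Darboux_frame (a b : Rbar) (xi mu nu : R -> R3) (G K T : R -> R) : Prop :=
  vsmooth_on a b xi /\ vsmooth_on a b mu /\ vsmooth_on a b nu /\
  smooth_on a b G /\ smooth_on a b K /\ smooth_on a b T /\
  forall s, in_I a b s ->
    dot (xi s) (xi s) = 1 /\ dot (mu s) (mu s) = 1 /\ dot (nu s) (nu s) = 1 /\
    dot (xi s) (mu s) = 0 /\ dot (xi s) (nu s) = 0 /\ dot (mu s) (nu s) = 0 /\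
    mu s = cross (nu s) (xi s) /\
    det3 (xi s) (mu s) (nu s) = 1 /\
    vis_derive xi s (vadd (vscal (G s) (mu s)) (vscal (K s) (nu s))) /\
    vis_derive mu s (vadd (vscal (- G s) (xi s)) (vscal (T s) (nu s))) /\
    vis_derive nu s (vadd (vscal (- K s) (xi s)) (vscal (- T s) (mu s))).

Definition xi_helix_axis (a b : Rbar) (xi : R -> R3) (d : R3) (theta : R) : Prop :=
  dot d d = 1 /\ forall s, in_I a b s -> dot (xi s) d = cos theta.

Definition xi_helix (a b : Rbar) (xi : R -> R3) : Prop :=
  exists (d : R3) (theta : R), xi_helix_axis a b xi d theta.

Definition sigma_xi (G K T : R -> R) (s : R) : R :=
  (Derive G s * K s - G s * Derive K s - (G s ^ 2 + K s ^ 2) * T s)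
  / Rpower (G s ^ 2 + K s ^ 2) (3 / 2).

From Stdlib Require Import Reals Lra.
From Coquelicot Require Import Coquelicot.
Open Scope R_scope.

(* Projecting the Darboux frame on a fixed vector e gives functions x = <xi,e>,
   m = <mu,e>, n = <nu,e> solving x' = G m + K n, m' = -G x + T n,
   n' = -K x - T m.  With N = sqrt (G^2 + K^2), the coordinate
   w = (K m - G n) / N along the unit vector eta = (K mu - G nu) / N satisfies
   w' = - sigma_xi x'.  So if sigma_xi = c is constant, c xi + eta is a fixed
   vector making a constant angle with xi.  Conversely, if x = cos theta is
   constant then G m + K n = 0, hence w is constant with w^2 = m^2 + n^2 =
   sin^2 theta, and differentiating G m + K n = 0 once more gives
   cos theta = w sigma_xi; thus w = +- sin theta <> 0 and cot theta = +- sigma_xi. *)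

Lemma in_I_between a b x y z : in_I a b x -> in_I a b y -> x <= z <= y -> in_I a b z.
Proof. unfold in_I; destruct a, b; simpl; intuition lra. Qed.

Lemma in_I_nonempty a b : Rbar_lt a b -> exists s, in_I a b s.
Proof.
  unfold in_I; destruct a as [a| |], b as [b| |]; simpl; intros Hab; try tauto.
  - exists ((a + b) / 2); lra.
  - exists (a + 1); lra.
  - exists (b - 1); lra.
  - exists 0; tauto.
Qed.

Lemma locally_in_I a b s : in_I a b s -> locally s (in_I a b).
Proof.
  apply (open_and (T := R_UniformSpace) (fun u : R => Rbar_lt a u) (fun u : R => Rbar_lt u b)).
  - apply open_Rbar_gt.
  - apply open_Rbar_lt.
Qed.

Lemma derive_0_const_on_I a b (f : R -> R) :
  (forall t, in_I a b t -> is_derive f t 0) ->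
  forall s t, in_I a b s -> in_I a b t -> f s = f t.
Proof.
  intros Hd s t Hs Ht.
  assert (Hbetween : forall z, Rmin s t <= z <= Rmax s t -> in_I a b z).
  { intros z Hz. unfold Rmin, Rmax in Hz.
    destruct (Rle_dec s t); [apply (in_I_between a b s t) | apply (in_I_between a b t s)];
      auto; lra. }
  destruct (MVT_gen f s t (fun _ => 0)) as [c [_ Hc]].
  - intros z Hz. apply Hd, Hbetween. lra.
  - intros z Hz. apply continuity_pt_filterlim, (ex_derive_continuous f).
    exists 0. apply Hd, Hbetween, Hz.
  - lra.
Qed.

Lemma is_derive_const_on_I a b (f : R -> R) c s :
  (forall t, in_I a b t -> f t = c) -> in_I a b s -> is_derive f s 0.
Proof.
  intros Hc Hs. apply (is_derive_ext_loc (fun _ => c)).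
  - apply (filter_imp (in_I a b)); [|exact (locally_in_I a b s Hs)].
    intros t Ht. symmetry. exact (Hc t Ht).
  - exact (is_derive_const c s).
Qed.

Lemma is_derive_const_on_I_eq_0 a b (f : R -> R) c s l :
  (forall t, in_I a b t -> f t = c) -> in_I a b s -> is_derive f s l -> l = 0.
Proof.
  intros Hc Hs Hd. rewrite <- (is_derive_unique _ _ _ Hd).
  exact (is_derive_unique _ _ _ (is_derive_const_on_I a b f c s Hc Hs)).
Qed.

Lemma dot_comm u w : dot u w = dot w u.
Proof. unfold dot; ring. Qed.

Lemma dot_vscal_r c u w : dot u (vscal c w) = c * dot u w.
Proof. unfold dot, vscal, mk3, v1, v2, v3; simpl; ring. Qed.

Lemma dot_vscal_l c u w : dot (vscal c u) w = c * dot u w.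
Proof. rewrite dot_comm, dot_vscal_r, dot_comm. reflexivity. Qed.

Lemma dot_vadd_l u w e : dot (vadd u w) e = dot u e + dot w e.
Proof. unfold dot, vadd, mk3, v1, v2, v3; simpl; ring. Qed.

Lemma is_derive_dot (u : R -> R3) s u' e :
  vis_derive u s u' -> is_derive (fun t => dot (u t) e) s (dot u' e).
Proof.
  intros (D1 & D2 & D3). unfold dot.
  apply (is_derive_plus (fun t => v1 (u t) * v1 e + v2 (u t) * v2 e)).
  apply (is_derive_plus (fun t => v1 (u t) * v1 e)).
  - exact (is_derive_scal_l _ s _ (v1 e) D1).
  - exact (is_derive_scal_l _ s _ (v2 e) D2).
  - exact (is_derive_scal_l _ s _ (v3 e) D3).
Qed.

Lemma parseval_cross x z d :
  dot x x = 1 -> dot z z = 1 -> dot x z = 0 ->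
  dot x d ^ 2 + dot (cross z x) d ^ 2 + dot z d ^ 2 = dot d d.
Proof.
  intros Hx Hz Hxz.
  assert (gram : dot (cross z x) d ^ 2 =
    dot d d * dot z z * dot x x + 2 * dot d z * dot z x * dot x d
    - dot d d * dot z x ^ 2 - dot z z * dot d x ^ 2 - dot x x * dot d z ^ 2).
  { destruct d as [[d1 d2] d3], x as [[x1 x2] x3], z as [[z1 z2] z3].
    unfold dot, cross, mk3, v1, v2, v3; simpl. ring. }
  rewrite gram, (dot_comm z x), (dot_comm d x), (dot_comm d z), Hx, Hz, Hxz. ring.
Qed.

Lemma Rpower_3_2 x : 0 < x -> Rpower x (3 / 2) = x * sqrt x.
Proof.
  intros Hx. replace (3 / 2) with (1 + / 2) by field.
  rewrite Rpower_plus, Rpower_1, Rpower_sqrt; auto.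
Qed.

Lemma sum_sqr_pos G K : G <> 0 \/ K <> 0 -> 0 < G ^ 2 + K ^ 2.
Proof.
  intros [H | H]; [pose proof (pow2_gt_0 G H) | pose proof (pow2_gt_0 K H)];
    pose proof (pow2_ge_0 G); pose proof (pow2_ge_0 K); lra.
Qed.

Definition eta_coord (G K m n : R -> R) (t : R) : R :=
  (K t * m t - G t * n t) / sqrt (G t ^ 2 + K t ^ 2).

Lemma is_derive_eta_coord (G K T x m n : R -> R) (s : R) :
  ex_derive G s -> ex_derive K s -> 0 < G s ^ 2 + K s ^ 2 ->
  is_derive m s (- G s * x s + T s * n s) ->
  is_derive n s (- K s * x s - T s * m s) ->
  is_derive (eta_coord G K m n) s (- sigma_xi G K T s * (G s * m s + K s * n s)).
Proof.
  intros [g HG] [k HK] Hpos Hm Hn.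
  set (N := sqrt (G s ^ 2 + K s ^ 2)).
  assert (HN : 0 < N) by (apply sqrt_lt_R0; exact Hpos).
  assert (HNN : N * N = G s ^ 2 + K s ^ 2) by (apply sqrt_sqrt; lra).
  set (m' := - G s * x s + T s * n s) in Hm.
  set (n' := - K s * x s - T s * m s) in Hn.
  assert (dbeta : is_derive (fun t => K t * m t - G t * n t) s
                 (k * m s + K s * m' - (g * n s + G s * n'))).
  { apply (is_derive_minus (fun t => K t * m t) (fun t => G t * n t));
      apply Derive.is_derive_mult; assumption. }
  assert (dN2 : is_derive (fun t => G t ^ 2 + K t ^ 2) s (2 * G s * g + 2 * K s * k)).
  { replace (2 * G s * g + 2 * K s * k)
      with (INR 2 * g * G s ^ pred 2 + INR 2 * k * K s ^ pred 2) by (simpl; ring).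
    apply (is_derive_plus (fun t => G t ^ 2) (fun t => K t ^ 2));
      apply is_derive_pow; assumption. }
  assert (dN : is_derive (fun t => sqrt (G t ^ 2 + K t ^ 2)) s ((G s * g + K s * k) / N)).
  { replace ((G s * g + K s * k) / N)
      with ((2 * G s * g + 2 * K s * k) / (2 * N)) by (field; lra).
    exact (is_derive_sqrt _ _ _ dN2 Hpos). }
  replace (- sigma_xi G K T s * (G s * m s + K s * n s)) with
    (((k * m s + K s * m' - (g * n s + G s * n')) * N
      - (K s * m s - G s * n s) * ((G s * g + K s * k) / N)) / N ^ 2).
  { apply (is_derive_div (fun t => K t * m t - G t * n t));
      [exact dbeta | exact dN | apply Rgt_not_eq, HN]. }
  unfold sigma_xi, m', n'.
  rewrite Rpower_3_2, (is_derive_unique _ _ _ HG), (is_derive_unique _ _ _ HK) by exact Hpos.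
  fold N. rewrite <- HNN. apply Rminus_diag_uniq.
  (* the two sides agree only modulo N^2 = G^2 + K^2 *)
  transitivity ((N * N - (G s ^ 2 + K s ^ 2)) * (k * m s - g * n s) / N ^ 3).
  - field. lra.
  - rewrite HNN. field. lra.
Qed.

Lemma eta_coord_mul_sigma (G K T x m n : R -> R) (s : R) :
  ex_derive G s -> ex_derive K s -> 0 < G s ^ 2 + K s ^ 2 ->
  is_derive m s (- G s * x s + T s * n s) ->
  is_derive n s (- K s * x s - T s * m s) ->
  G s * m s + K s * n s = 0 ->
  is_derive (fun t => G t * m t + K t * n t) s 0 ->
  x s = eta_coord G K m n s * sigma_xi G K T s.
Proof.
  intros [g HG] [k HK] Hpos Hm Hn Hu Hu'.
  set (N2 := G s ^ 2 + K s ^ 2) in *.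
  set (N := sqrt N2).
  assert (HN : 0 < N) by (apply sqrt_lt_R0; exact Hpos).
  assert (HNN : N * N = N2) by (apply sqrt_sqrt; lra).
  assert (du : is_derive (fun t => G t * m t + K t * n t) s
     (g * m s + G s * (- G s * x s + T s * n s) + (k * n s + K s * (- K s * x s - T s * m s)))).
  { apply (is_derive_plus (fun t => G t * m t) (fun t => K t * n t));
      apply Derive.is_derive_mult; assumption. }
  assert (Hu'0 := is_derive_unique _ _ _ Hu').
  rewrite (is_derive_unique _ _ _ du) in Hu'0.
  assert (key : x s * N2 ^ 2 = (K s * m s - G s * n s) * (g * K s - G s * k - N2 * T s)).
  { apply Rminus_diag_uniq.
    transitivity ((g * G s + k * K s) * (G s * m s + K s * n s) - N2 *
      (g * m s + G s * (- G s * x s + T s * n s) + (k * n s + K s * (- K s * x s - T s * m s)))).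
    - unfold N2. ring.
    - rewrite Hu, Hu'0. ring. }
  unfold eta_coord, sigma_xi.
  rewrite Rpower_3_2, (is_derive_unique _ _ _ HG), (is_derive_unique _ _ _ HK) by exact Hpos.
  fold N2 N.
  replace ((K s * m s - G s * n s) / N * ((g * K s - G s * k - N2 * T s) / (N2 * N)))
    with ((K s * m s - G s * n s) * (g * K s - G s * k - N2 * T s) / (N2 * (N * N)))
    by (field; lra).
  rewrite HNN, <- key. field. lra.
Qed.

Definition darboux_system (a b : Rbar) (G K T x m n : R -> R) : Prop :=
  forall s, in_I a b s ->
    is_derive x s (G s * m s + K s * n s) /\
    is_derive m s (- G s * x s + T s * n s) /\
    is_derive n s (- K s * x s - T s * m s).

Section DarbouxSystem.

Variables (a b : Rbar) (G K T x m n : R -> R).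
Hypothesis solution : darboux_system a b G K T x m n.
Hypothesis GK_derivable : forall s, in_I a b s -> ex_derive G s /\ ex_derive K s.
Hypothesis GK_nondegenerate : forall s, in_I a b s -> 0 < G s ^ 2 + K s ^ 2.

Lemma is_derive_eta_coord_on_I s : in_I a b s ->
  is_derive (eta_coord G K m n) s (- sigma_xi G K T s * (G s * m s + K s * n s)).
Proof.
  intros Hs. destruct (GK_derivable s Hs) as [dG dK].
  destruct (solution s Hs) as (_ & dm & dn).
  exact (is_derive_eta_coord G K T x m n s dG dK (GK_nondegenerate s Hs) dm dn).
Qed.

Lemma darboux_system_sigma_const c :
  (forall s, in_I a b s -> sigma_xi G K T s = c) ->
  forall s t, in_I a b s -> in_I a b t ->
  c * x s + eta_coord G K m n s = c * x t + eta_coord G K m n t.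
Proof.
  intros Hc. apply derive_0_const_on_I. intros t Ht.
  replace 0 with (c * (G t * m t + K t * n t)
                  + - sigma_xi G K T t * (G t * m t + K t * n t)) by (rewrite (Hc t Ht); ring).
  apply (is_derive_plus (fun t => c * x t) (eta_coord G K m n)).
  - apply is_derive_scal. exact (proj1 (solution t Ht)).
  - exact (is_derive_eta_coord_on_I t Ht).
Qed.

Section ConstantX.

Variable x0 : R.
Hypothesis x_const : forall s, in_I a b s -> x s = x0.

Lemma darboux_system_orthogonal s : in_I a b s -> G s * m s + K s * n s = 0.
Proof.
  intros Hs. exact (is_derive_const_on_I_eq_0 a b x x0 s _ x_const Hs (proj1 (solution s Hs))).
Qed.

Lemma darboux_system_x_eq s : in_I a b s -> x0 = eta_coord G K m n s * sigma_xi G K T s.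
Proof.
  intros Hs. rewrite <- (x_const s Hs).
  destruct (GK_derivable s Hs) as [dG dK]. destruct (solution s Hs) as (_ & dm & dn).
  apply (eta_coord_mul_sigma G K T x m n s dG dK (GK_nondegenerate s Hs) dm dn).
  - exact (darboux_system_orthogonal s Hs).
  - exact (is_derive_const_on_I a b _ 0 s darboux_system_orthogonal Hs).
Qed.

Lemma darboux_system_eta_const :
  forall s t, in_I a b s -> in_I a b t -> eta_coord G K m n s = eta_coord G K m n t.
Proof.
  apply derive_0_const_on_I. intros t Ht.
  replace 0 with (- sigma_xi G K T t * (G t * m t + K t * n t))
    by (rewrite (darboux_system_orthogonal t Ht); ring).
  exact (is_derive_eta_coord_on_I t Ht).
Qed.

End ConstantX.

End DarbouxSystem.

Lemma xi_helix_of_fixed_dot a b (xi : R -> R3) D c :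
  0 < dot D D -> c ^ 2 <= dot D D ->
  (forall s, in_I a b s -> dot (xi s) D = c) -> xi_helix a b xi.
Proof.
  intros HD Hc Hdot.
  set (S := sqrt (dot D D)).
  assert (HS : 0 < S) by (apply sqrt_lt_R0; exact HD).
  assert (HSS : S * S = dot D D) by (apply sqrt_sqrt; lra).
  exists (vscal (/ S) D), (acos (c / S)). split.
  - rewrite dot_vscal_l, dot_vscal_r, <- HSS. field. lra.
  - intros s Hs. rewrite dot_vscal_r, Hdot by exact Hs.
    assert (Hbound : - S <= c <= S) by nra.
    rewrite cos_acos.
    + field. lra.
    + split; apply Rmult_le_reg_r with S;
        try lra; field_simplify; lra.
Qed.

Definition coord (u : R -> R3) (e : R3) (t : R) : R := dot (u t) e.

Section Frame.

Variables (a b : Rbar) (xi mu nu : R -> R3) (G K T : R -> R).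
Hypothesis frame : Darboux_frame a b xi mu nu G K T.
Hypothesis nondegenerate : forall s, in_I a b s -> G s <> 0 \/ K s <> 0.

Lemma Darboux_frame_system e :
  darboux_system a b G K T (coord xi e) (coord mu e) (coord nu e).
Proof.
  destruct frame as (_ & _ & _ & _ & _ & _ & Hframe).
  intros s Hs. destruct (Hframe s Hs) as (_ & _ & _ & _ & _ & _ & _ & _ & dxi & dmu & dnu).
  pose proof (is_derive_dot _ _ _ e dxi) as Dx.
  pose proof (is_derive_dot _ _ _ e dmu) as Dm.
  pose proof (is_derive_dot _ _ _ e dnu) as Dn.
  rewrite dot_vadd_l, !dot_vscal_l in Dx, Dm, Dn.
  unfold coord, Rminus. rewrite Ropp_mult_distr_l. auto.
Qed.

Lemma Darboux_frame_GK_derivable s : in_I a b s -> ex_derive G s /\ ex_derive K s.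
Proof.
  destruct frame as (_ & _ & _ & HG & HK & _). intros Hs.
  exact (conj (HG 0%nat s Hs) (HK 0%nat s Hs)).
Qed.

Lemma Darboux_frame_GK_pos s : in_I a b s -> 0 < G s ^ 2 + K s ^ 2.
Proof. intros Hs. exact (sum_sqr_pos _ _ (nondegenerate s Hs)). Qed.

Lemma Darboux_frame_orthonormal s : in_I a b s ->
  dot (xi s) (xi s) = 1 /\ dot (mu s) (mu s) = 1 /\ dot (nu s) (nu s) = 1 /\
  dot (xi s) (mu s) = 0 /\ dot (xi s) (nu s) = 0 /\ dot (mu s) (nu s) = 0.
Proof.
  destruct frame as (_ & _ & _ & _ & _ & _ & Hframe). intros Hs.
  destruct (Hframe s Hs) as (Hxx & Hmm & Hnn & Hxm & Hxn & Hmn & _). tauto.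
Qed.

Lemma Darboux_frame_parseval s d : in_I a b s ->
  dot (xi s) d ^ 2 + dot (mu s) d ^ 2 + dot (nu s) d ^ 2 = dot d d.
Proof.
  destruct frame as (_ & _ & _ & _ & _ & _ & Hframe). intros Hs.
  destruct (Hframe s Hs) as (Hxx & _ & Hnn & _ & Hxn & _ & Hmu & _).
  rewrite Hmu. exact (parseval_cross _ _ d Hxx Hnn Hxn).
Qed.

Lemma helix_axis_eta_coord_sqr d theta : xi_helix_axis a b xi d theta ->
  forall s, in_I a b s -> eta_coord G K (coord mu d) (coord nu d) s ^ 2 = sin theta ^ 2.
Proof.
  intros [Hdd Hcos] s Hs.
  assert (Horth := darboux_system_orthogonal a b G K T _ _ _ (Darboux_frame_system d)
                     (cos theta) Hcos s Hs).
  assert (Hpars := Darboux_frame_parseval s d Hs).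
  rewrite Hcos, Hdd in Hpars by exact Hs.
  assert (Hsin := sin2_cos2 theta). unfold Rsqr in Hsin.
  assert (Hpos := Darboux_frame_GK_pos s Hs).
  unfold eta_coord, coord in *.
  set (p := dot (mu s) d) in *. set (q := dot (nu s) d) in *.
  set (N := sqrt (G s ^ 2 + K s ^ 2)).
  assert (HN : 0 < N) by (apply sqrt_lt_R0; exact Hpos).
  assert (HNN : N * N = G s ^ 2 + K s ^ 2) by (apply sqrt_sqrt; lra).
  assert (Hlagrange : (K s * p - G s * q) ^ 2 = (G s ^ 2 + K s ^ 2) * (p ^ 2 + q ^ 2)).
  { transitivity ((G s ^ 2 + K s ^ 2) * (p ^ 2 + q ^ 2) - (G s * p + K s * q) ^ 2).
    - ring.
    - rewrite Horth. ring. }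
  replace (((K s * p - G s * q) / N) ^ 2) with ((K s * p - G s * q) ^ 2 / (N * N))
    by (field; lra).
  rewrite Hlagrange, HNN. field_simplify; lra.
Qed.

Lemma helix_axis_cot d theta : Rbar_lt a b -> xi_helix_axis a b xi d theta ->
  sin theta <> 0 /\
  ((forall s, in_I a b s -> cos theta / sin theta = - sigma_xi G K T s) \/
   (forall s, in_I a b s -> cos theta / sin theta = sigma_xi G K T s)).
Proof.
  intros Hab Hax. destruct (in_I_nonempty a b Hab) as [s0 Hs0].
  set (w := eta_coord G K (coord mu d) (coord nu d)).
  assert (Hw : forall s, in_I a b s -> w s = w s0).
  { intros s Hs. exact (darboux_system_eta_const a b G K T _ _ _ (Darboux_frame_system d)
      Darboux_frame_GK_derivable Darboux_frame_GK_pos (cos theta) (proj2 Hax) s s0 Hs Hs0). }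
  assert (Hcos : forall s, in_I a b s -> cos theta = w s0 * sigma_xi G K T s).
  { intros s Hs. rewrite <- (Hw s Hs).
    exact (darboux_system_x_eq a b G K T _ _ _ (Darboux_frame_system d)
      Darboux_frame_GK_derivable Darboux_frame_GK_pos (cos theta) (proj2 Hax) s Hs). }
  assert (Hw2 := helix_axis_eta_coord_sqr d theta Hax s0 Hs0). fold w in Hw2.
  assert (Hsin : sin theta <> 0).
  { intros H0. rewrite H0 in Hw2.
    assert (Hw0 : w s0 = 0) by nra.
    assert (Hcos0 := Hcos s0 Hs0). rewrite Hw0, Rmult_0_l in Hcos0.
    pose proof (sin2_cos2 theta) as Hone. unfold Rsqr in Hone.
    rewrite H0, Hcos0 in Hone. lra. }
  split; [exact Hsin |].
  assert (Hsign : (w s0 - sin theta) * (w s0 + sin theta) = 0) by nra.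
  destruct (Rmult_integral _ _ Hsign) as [Hplus | Hminus].
  - right. intros s Hs. rewrite (Hcos s Hs). replace (w s0) with (sin theta) by lra.
    field. exact Hsin.
  - left. intros s Hs. rewrite (Hcos s Hs). replace (w s0) with (- sin theta) by lra.
    field. exact Hsin.
Qed.

Lemma xi_helix_of_sigma_const c : Rbar_lt a b ->
  (forall s, in_I a b s -> sigma_xi G K T s = c) -> xi_helix a b xi.
Proof.
  intros Hab Hc. destruct (in_I_nonempty a b Hab) as [s0 Hs0].
  assert (Hpos0 := Darboux_frame_GK_pos s0 Hs0).
  set (N0 := sqrt (G s0 ^ 2 + K s0 ^ 2)).
  assert (HN0 : 0 < N0) by (apply sqrt_lt_R0; exact Hpos0).
  assert (HNN0 : N0 * N0 = G s0 ^ 2 + K s0 ^ 2) by (apply sqrt_sqrt; lra).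
  set (D := vadd (vscal c (xi s0))
                 (vadd (vscal (K s0 / N0) (mu s0)) (vscal (- G s0 / N0) (nu s0)))).
  assert (HD : forall e, dot D e = c * coord xi e s0 + eta_coord G K (coord mu e) (coord nu e) s0).
  { intros e. unfold D, eta_coord, coord. rewrite !dot_vadd_l, !dot_vscal_l. fold N0.
    field. lra. }
  assert (Hfix : forall s, in_I a b s -> dot (xi s) D = c).
  { intros s Hs. rewrite dot_comm, HD.
    rewrite (darboux_system_sigma_const a b G K T _ _ _ (Darboux_frame_system (xi s))
      Darboux_frame_GK_derivable Darboux_frame_GK_pos c Hc s0 s Hs0 Hs).
    destruct (Darboux_frame_orthonormal s Hs) as (Hxx & _ & _ & Hxm & Hxn & _).
    unfold eta_coord, coord.
    rewrite Hxx, (dot_comm (mu s) (xi s)), (dot_comm (nu s) (xi s)), Hxm, Hxn.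
    field. apply Rgt_not_eq, sqrt_lt_R0, Darboux_frame_GK_pos, Hs. }
  assert (HDD : dot D D = 1 + c ^ 2).
  { rewrite <- (Darboux_frame_parseval s0 D Hs0).
    rewrite (dot_comm (xi s0) D), (dot_comm (mu s0) D), (dot_comm (nu s0) D), !HD.
    destruct (Darboux_frame_orthonormal s0 Hs0) as (Hxx & Hmm & Hnn & Hxm & Hxn & Hmn).
    unfold eta_coord, coord. rewrite (dot_comm (mu s0) (xi s0)), (dot_comm (nu s0) (xi s0)),
      (dot_comm (nu s0) (mu s0)), Hxx, Hmm, Hnn, Hxm, Hxn, Hmn. fold N0.
    transitivity (c ^ 2 + (G s0 ^ 2 + K s0 ^ 2) / (N0 * N0)); [field; lra |].
    rewrite HNN0. field. lra. }
  apply (xi_helix_of_fixed_dot a b xi D c); [rewrite HDD; nra | rewrite HDD; lra | exact Hfix].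
Qed.

End Frame.

Theorem theorem6 (a b : Rbar) (xi mu nu : R -> R3) (G K T : R -> R) :
  Rbar_lt a b ->
  Darboux_frame a b xi mu nu G K T ->
  (forall s, in_I a b s -> G s <> 0 \/ K s <> 0) ->
  (xi_helix a b xi <->
     exists c : R, forall s, in_I a b s -> sigma_xi G K T s = c) /\
  (forall (d : R3) (theta : R), xi_helix_axis a b xi d theta ->
     sin theta <> 0 /\
     ((forall s, in_I a b s -> cos theta / sin theta = - sigma_xi G K T s) \/
      (forall s, in_I a b s -> cos theta / sin theta = sigma_xi G K T s))).
Proof.
  intros Hab frame nondegenerate.
  assert (Hcot := fun d theta =>
    helix_axis_cot a b xi mu nu G K T frame nondegenerate d theta Hab).
  split; [split | exact Hcot].
  - intros (d & theta & Hax). destruct (Hcot d theta Hax) as (_ & [Hminus | Hplus]).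
    + exists (- (cos theta / sin theta)). intros s Hs. rewrite (Hminus s Hs). ring.
    + exists (cos theta / sin theta). intros s Hs. rewrite (Hplus s Hs). reflexivity.
  - intros (c & Hc).
    exact (xi_helix_of_sigma_const a b xi mu nu G K T frame nondegenerate c Hab Hc).
Qed.
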